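(* Let $A,B\in\mathscr{B}(\Omega)$ with $\underline{P}(B)>0$ and $\underline{P}(B^c)>0$, and let $\mathcal{B}=\{B,B^c\}$. If $\mathcal{B}$ dilates $A$ under either Dempster's rule or the Geometric rule, then there exists a probability measure $P^*\ge\underline{P}$ such that $P^*(A\cap B)=P^*(A)P^*(B)$.
   Context: $\Omega$ is a separable, completely metrizable space with Borel $\sigma$-algebra $\mathscr{B}(\Omega)$; $\underline{P}$ is a Choquet capacity of order 2 on $\mathscr{B}(\Omega)$ (a coherent lower probability with weakly compact set of dominating measures satisfying $\underline{P}(A\cup B)\ge\underline{P}(A)+\underline{P}(B)-\underline{P}(A\cap B)$); $\Pi=\{P:P\ge\underline{P}\}$, $\underline{P}(A)=\inf_{P\in\Pi}P(A)$, $\overline{P}(A)=\sup_{P\in\Pi}P(A)=1-\underline{P}(A^c)$. Dempster's rule: $\overline{P}_{\mathfrak{D}}(A\mid Z)=\overline{P}(A\cap Z)/\overline{P}(Z)$, $\underline{P}_{\mathfrak{D}}(A\mid Z)=1-\overline{P}_{\mathfrak{D}}(A^c\mid Z)$. Geometric rule: $\underline{P}_{\mathfrak{G}}(A\mid Z)=\underline{P}(A\cap Z)/\underline{P}(Z)$, $\overline{P}_{\mathfrak{G}}(A\mid Z)=1-\underline{P}_{\mathfrak{G}}(A^c\mid Z)$. For a rule with conditional lower/upper probabilities $\underline{P}_\bullet,\overline{P}_\bullet$, $\mathcal{B}$ dilates $A$ if $\sup_{Z\in\mathcal{B}}\underline{P}_\bullet(A\mid Z)\le\underline{P}(A)\le\overline{P}(A)\le\inf_{Z\in\mathcal{B}}\overline{P}_\bullet(A\mid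 Z)$ with at least one of the two outer inequalities strict. *)

From HB Require Import structures.
From mathcomp Require Import all_boot all_order all_algebra.
From mathcomp Require Import all_classical all_reals all_analysis.
Set Implicit Arguments. Unset Strict Implicit. Unset Printing Implicit Defensive.
Import Order.TTheory GRing.Theory Num.Theory.
Import numFieldNormedType.Exports.
Local Open Scope classical_set_scope.
Local Open Scope ring_scope.

(* We take the complete
   (pseudo)metric as given structure, and require Hausdorff (so the metric is a
   genuine metric) and separability (a countable dense subset). *)
Definition polish_space (R : realType) (T : completePseudoMetricType R) : Prop :=
  hausdorff_space T /\ exists D : set T, countable D /\ dense D.

Definition borel_type (R : realType) (T : completePseudoMetricType R) :=
  g_sigma_algebraType (@open T).

Section Capacity.
Variables (R : realType) (T : completePseudoMetricType R).
Notation Omega := (borel_type T).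

Definition core (Plow : set T -> R) : set (probability Omega R) :=
  [set P | forall A : set Omega, measurable A -> ((Plow A)%:E <= P A)%E].

(* Coherent lower probability: Plow is the lower envelope of its core
   (this forces the core to be nonempty, since Plow is real valued). *)
Definition coherent (Plow : set T -> R) : Prop :=
  forall A : set Omega, measurable A ->
    (Plow A)%:E = ereal_inf [set P A | P in core Plow].

Definition two_monotone (Plow : set T -> R) : Prop :=
  forall A B : set Omega, measurable A -> measurable B ->
    Plow A + Plow B - Plow (A `&` B) <= Plow (A `|` B).

Definition weak_cvg (Ps : nat -> probability Omega R) (P : probability Omega R)
  : Prop :=
  forall f : T -> R, continuous f -> (exists M : R, forall x, `|f x| <= M) ->
    (fun n => (\int[Ps n]_(x in [set: Omega]) (f x)%:E)%E) @ \oo -->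
      (\int[P]_(x in [set: Omega]) (f x)%:E)%E.

(* On a separable metric
   space the weak topology on probability measures is metrizable (Levy-Prokhorov
   metric), so compactness is equivalent to sequential compactness. *)
Definition weakly_compact (S : set (probability Omega R)) : Prop :=
  forall Ps : nat -> probability Omega R, (forall n, S (Ps n)) ->
    exists phi : nat -> nat, (forall n, (phi n < phi n.+1)%N) /\
      exists2 P, S P & weak_cvg (Ps \o phi) P.

Definition choquet2 (Plow : set T -> R) : Prop :=
  coherent Plow /\ weakly_compact (core Plow) /\ two_monotone Plow.

Definition upper (Plow : set T -> R) (A : set T) : R := 1 - Plow (~` A).

Definition upD (Plow : set T -> R) (A Z : set T) : R :=
  upper Plow (A `&` Z) / upper Plow Z.
Definition lowD (Plow : set T -> R) (A Z : set T) : R :=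
  1 - upD Plow (~` A) Z.

Definition lowG (Plow : set T -> R) (A Z : set T) : R :=
  Plow (A `&` Z) / Plow Z.
Definition upG (Plow : set T -> R) (A Z : set T) : R :=
  1 - lowG Plow (~` A) Z.

Definition dilates (Plow : set T -> R) (lowc upc : set T -> set T -> R)
    (Bs : set (set T)) (A : set T) : Prop :=
  let s := sup [set lowc A Z | Z in Bs] in
  let i := inf [set upc A Z | Z in Bs] in
  s <= Plow A /\ Plow A <= upper Plow A /\ upper Plow A <= i /\
  (s < Plow A \/ upper Plow A < i).

End Capacity.

From HB Require Import structures.
From mathcomp Require Import all_boot all_order all_algebra.
From mathcomp Require Import all_classical all_reals all_analysis.
From mathcomp Require Import lra ring.
Import Order.TTheory GRing.Theory Num.Theory.
Import numFieldNormedType.Exports.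
Set Implicit Arguments. Unset Strict Implicit.
Local Open Scope classical_set_scope.
Local Open Scope ring_scope.

(** Dilation forces a sign change of the event covariance
    [P (A `&` B) - P A * P B] over the core.  For instance, if Dempster's rule
    dilates [A] from below, then [lowD A Z < Plow A] for [Z = B] and
    [Z = ~` B]; each of these inequalities is witnessed, through the lower
    envelope, by a core measure [P] with [P A * P Z < P (A `&` Z)], and since
    the covariance with [~` B] is minus the covariance with [B], the two
    witnesses give covariances of [A] and [B] of opposite signs.  The core is
    closed under mixtures, and the covariance of the mixture with weight [t]
    is a polynomial in [t], so the intermediate value theorem yields a core
    measure under which [A] and [B] are independent. *)

Lemma min_le0_le_max (R : realDomainType) (x y : R) :
  x * y <= 0 -> Num.min x y <= 0 <= Num.max x y.
Proof.
rewrite ge_min le_max => xy.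
by have [x0|x0] := leP x 0; have [y0|y0] := leP 0 y; rewrite ?x0 ?y0 ?orbT //=; nra.
Qed.

Lemma sup_image2_lt (U : Type) (R : realType) (g : U -> R) (x y : U) (r : R) :
  sup [set g z | z in [set x; y]] < r -> g x < r /\ g y < r.
Proof.
have ub : has_ubound [set g z | z in [set x; y]].
  by exists (Num.max (g x) (g y)) => _ [z [->|->] <-]; rewrite le_max lexx ?orbT.
move=> supr; split; apply: le_lt_trans supr; apply: (ub_le_sup ub).
  by exists x => //; left.
by exists y => //; right.
Qed.

Lemma inf_image2_gt (U : Type) (R : realType) (g : U -> R) (x y : U) (r : R) :
  r < inf [set g z | z in [set x; y]] -> r < g x /\ r < g y.
Proof.
have lb : has_lbound [set g z | z in [set x; y]].
  by exists (Num.min (g x) (g y)) => _ [z [->|->] <-]; rewrite ge_min lexx ?orbT.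
move=> rinf; split; apply: lt_le_trans rinf _; apply: (ge_inf lb).
  by exists x => //; left.
by exists y => //; right.
Qed.

Section probability_mixture.
Context d (T : measurableType d) (R : realType).
Variables (P1 P2 : probability T R) (t : R) (t0 : 0 <= t) (t1 : t <= 1).

Let subr1_ge0 : 0 <= 1 - t. Proof. by rewrite subr_ge0. Qed.

Definition mix_prob : set T -> \bar R :=
  measure_add (mscale (NngNum t0) P1) (mscale (NngNum subr1_ge0) P2).

HB.instance Definition _ := Measure.copy mix_prob
  (measure_add (mscale (NngNum t0) P1) (mscale (NngNum subr1_ge0) P2)).

Lemma mix_probE A : mix_prob A = (t%:E * P1 A + (1 - t)%:E * P2 A)%E.
Proof. exact: measure_addE. Qed.

Let mix_prob_setT : mix_prob setT = 1%E.
Proof. by rewrite mix_probE !probability_setT !mule1 -EFinD subrKC. Qed.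

HB.instance Definition _ :=
  Measure_isProbability.Build _ _ _ mix_prob mix_prob_setT.

End probability_mixture.

Section real_probability.
Context d (T : measurableType d) (R : realType) (P : probability T R).
Implicit Types X Y : set T.

Definition pr X : R := fine (P X).

Lemma prE X : measurable X -> P X = (pr X)%:E.
Proof. by move=> mX; rewrite fineK // fin_num_measure. Qed.

Lemma pr_ge0 X : measurable X -> 0 <= pr X.
Proof. by move=> mX; rewrite -lee_fin -prE. Qed.

Lemma prC X : measurable X -> pr (~` X) = 1 - pr X.
Proof.
move=> mX; apply/EFin_inj; rewrite -prE ?probability_setC ?prE //.
exact: measurableC.
Qed.

Lemma prIC X Y : measurable X -> measurable Y ->
  pr (X `&` ~` Y) = pr X - pr (X `&` Y).
Proof.
move=> mX mY; apply/EFin_inj; rewrite EFinB -!prE -?setDE ?measureD //.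
- by rewrite ltey_eq fin_num_measure.
- exact: measurableI.
- exact: measurableD.
Qed.

Definition event_cov X Y : R := pr (X `&` Y) - pr X * pr Y.

Lemma event_covCr X Y : measurable X -> measurable Y ->
  event_cov X (~` Y) = - event_cov X Y.
Proof. by move=> mX mY; rewrite /event_cov prIC // prC //; ring. Qed.

Lemma event_covCl X Y : measurable X -> measurable Y ->
  event_cov (~` X) Y = - event_cov X Y.
Proof. by move=> mX mY; rewrite /event_cov setIC prIC // prC // setIC; ring. Qed.

Lemma event_cov_eq0 X Y : measurable X -> measurable Y ->
  event_cov X Y = 0 -> P (X `&` Y) = (P X * P Y)%E.
Proof.
move=> mX mY /eqP; rewrite subr_eq0 => /eqP covXY.
by rewrite !prE ?covXY //; exact: measurableI.
Qed.

End real_probability.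

Section mixture_closed.
Context d (T : measurableType d) (R : realType).
Implicit Types S : set (probability T R).

Lemma pr_mix (P1 P2 : probability T R) (t : R) (t0 : 0 <= t) (t1 : t <= 1)
    (X : set T) : measurable X ->
  pr (mix_prob P1 P2 t0 t1) X = t * pr P1 X + (1 - t) * pr P2 X.
Proof. by move=> mX; apply/EFin_inj; rewrite -prE //= mix_probE !prE. Qed.

Definition mix_closed S := forall (P1 P2 : probability T R) (t : R)
  (t0 : 0 <= t) (t1 : t <= 1), S P1 -> S P2 -> S (mix_prob P1 P2 t0 t1).

Lemma mix_closed_event_cov0 S (P1 P2 : probability T R) (A B : set T) :
  mix_closed S -> S P1 -> S P2 -> measurable A -> measurable B ->
  event_cov P1 A B * event_cov P2 A B <= 0 ->
  exists2 P, S P & event_cov P A B = 0.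
Proof.
move=> Smix S1 S2 mA mB cov12.
have mAB : measurable (A `&` B) by exact: measurableI.
pose seg (u v : R) : {poly R} := v%:P + (u - v) *: 'X.
have segE u v s : (seg u v).[s] = s * u + (1 - s) * v.
  by rewrite /seg !hornerE; ring.
pose p := seg (pr P1 (A `&` B)) (pr P2 (A `&` B)) -
  seg (pr P1 A) (pr P2 A) * seg (pr P1 B) (pr P2 B).
have covE s (s0 : 0 <= s) (s1 : s <= 1) :
    event_cov (mix_prob P1 P2 s0 s1) A B = p.[s].
  by rewrite /event_cov !pr_mix // hornerD hornerN hornerM !segE.
have p0 : p.[0] = event_cov P2 A B.
  by rewrite hornerD hornerN hornerM !segE /event_cov; ring.
have p1 : p.[1] = event_cov P1 A B.
  by rewrite hornerD hornerN hornerM !segE /event_cov; ring.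
have [s] : exists2 s, s \in `[0, 1] & p.[s] = 0.
  apply: IVT => //; first exact/continuous_subspaceT/continuous_horner.
  by rewrite p0 p1 min_le0_le_max // mulrC.
rewrite in_itv /= => /andP[s0 s1] ps.
by exists (mix_prob P1 P2 s0 s1); [exact: Smix | rewrite covE].
Qed.

End mixture_closed.

Section lower_probability_core.
Context (R : realType) (T : completePseudoMetricType R).
Notation Omega := (borel_type T).
Variable Plow : set T -> R.
Implicit Types (X : set Omega) (P : probability Omega R).

Lemma core_Plow_le P X : core Plow P -> measurable X -> Plow X <= pr P X.
Proof. by move=> cP mX; rewrite -lee_fin -prE //; exact: cP. Qed.

Lemma core_le_upper P X : core Plow P -> measurable X -> pr P X <= upper Plow X.
Proof.
move=> cP mX; have := core_Plow_le cP (measurableC mX).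
by rewrite prC // /upper; lra.
Qed.

Lemma mix_closed_core : mix_closed (core Plow).
Proof.
move=> P1 P2 t t0 t1 c1 c2 X mX.
have := core_Plow_le c1 mX; have := core_Plow_le c2 mX.
rewrite (prE (mix_prob P1 P2 t0 t1)) // pr_mix // lee_fin; nra.
Qed.

End lower_probability_core.

Section coherent_lower_probability.
Context (R : realType) (T : completePseudoMetricType R).
Notation Omega := (borel_type T).
Variable Plow : set T -> R.
Hypothesis coh : coherent Plow.
Implicit Types (C X Z : set Omega) (P : probability Omega R).

Lemma Plow_ge0 X : measurable X -> 0 <= Plow X.
Proof.
move=> mX; rewrite -lee_fin coh //; apply/ereal_infP => _ [P _ <-].
exact: measure_ge0.
Qed.

Lemma core_nonempty : exists P, core Plow P.
Proof.
have : (ereal_inf [set P setT | P in core Plow] < (Plow setT + 1)%:E)%E.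
  by rewrite -coh // lte_fin ltrDl.
by move=> /ereal_inf_lt[_ [P cP _] _]; exists P.
Qed.

Lemma Plow_le_upper X : measurable X -> Plow X <= upper Plow X.
Proof.
move=> mX; have [P cP] := core_nonempty.
exact: le_trans (core_Plow_le cP mX) (core_le_upper cP mX).
Qed.

Lemma core_pr_lt X r : measurable X -> Plow X < r ->
  exists2 P, core Plow P & pr P X < r.
Proof.
move=> mX; rewrite -lte_fin coh // => /ereal_inf_lt[_ [P cP <-]].
by rewrite prE // lte_fin; exists P.
Qed.

Lemma core_event_cov_lt0 C Z : measurable C -> measurable Z ->
  Plow (C `&` Z) < Plow C * Plow Z ->
  exists2 P, core Plow P & event_cov P C Z < 0.
Proof.
move=> mC mZ /(core_pr_lt (measurableI _ _ mC mZ))[P cP covP].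
exists P => //; rewrite subr_lt0 (lt_le_trans covP) //.
by rewrite ler_pM ?Plow_ge0 ?core_Plow_le.
Qed.

Lemma core_event_cov_gt0 C Z : measurable C -> measurable Z ->
  upper Plow C * upper Plow Z < upper Plow (C `&` Z) ->
  exists2 P, core Plow P & 0 < event_cov P C Z.
Proof.
move=> mC mZ; rewrite [upper _ (C `&` Z)]/upper ltrBrDl -ltrBrDr.
move=> /(core_pr_lt (measurableC (measurableI _ _ mC mZ)))[P cP covP].
exists P => //; rewrite subr_gt0.
have : pr P C * pr P Z <= upper Plow C * upper Plow Z.
  by rewrite ler_pM ?pr_ge0 ?core_le_upper.
by move: covP; rewrite prC //; [lra | exact: measurableI].
Qed.

End coherent_lower_probability.

Section conditioning_rules.
Context (R : realType) (T : completePseudoMetricType R).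
Notation Omega := (borel_type T).
Variable Plow : set T -> R.
Hypothesis coh : coherent Plow.
Variables A Z : set Omega.
Hypotheses (mA : measurable A) (mZ : measurable Z).

Lemma lowD_lt_event_cov_gt0 : 0 < upper Plow Z -> lowD Plow A Z < Plow A ->
  exists2 P, core Plow P & 0 < event_cov P (~` A) Z.
Proof.
move=> uZ lowDZ; apply: core_event_cov_gt0 => //; first exact: measurableC.
have upperCA : upper Plow (~` A) = 1 - Plow A by rewrite /upper setCK.
by rewrite -ltr_pdivlMr // upperCA; move: lowDZ; rewrite /lowD /upD; lra.
Qed.

Lemma upD_gt_event_cov_gt0 : 0 < upper Plow Z -> upper Plow A < upD Plow A Z ->
  exists2 P, core Plow P & 0 < event_cov P A Z.
Proof.
by move=> uZ upDZ; apply: core_event_cov_gt0 => //; rewrite -ltr_pdivlMr.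
Qed.

Lemma lowG_lt_event_cov_lt0 : 0 < Plow Z -> lowG Plow A Z < Plow A ->
  exists2 P, core Plow P & event_cov P A Z < 0.
Proof.
by move=> lZ lowGZ; apply: core_event_cov_lt0 => //; rewrite -ltr_pdivrMr.
Qed.

Lemma upG_gt_event_cov_lt0 : 0 < Plow Z -> upper Plow A < upG Plow A Z ->
  exists2 P, core Plow P & event_cov P (~` A) Z < 0.
Proof.
move=> lZ upGZ; apply: core_event_cov_lt0 => //; first exact: measurableC.
by rewrite -ltr_pdivrMr //; move: upGZ; rewrite /upG /lowG /upper; lra.
Qed.

End conditioning_rules.

Section event_cov_sign_change.
Context d (T : measurableType d) (R : realType).
Variable S : set (probability T R).

Definition event_cov_sign_change (A B : set T) := exists P1 P2,
  [/\ S P1, S P2 & event_cov P1 A B * event_cov P2 A B <= 0].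

Lemma event_cov_sign_changeCl A B : measurable A -> measurable B ->
  event_cov_sign_change (~` A) B -> event_cov_sign_change A B.
Proof.
move=> mA mB [P1 [P2 [S1 S2]]]; rewrite !event_covCl // mulrNN.
by exists P1, P2.
Qed.

Lemma event_cov_sign_change_setC (P1 P2 : probability T R) A B :
  measurable A -> measurable B -> S P1 -> S P2 ->
  0 < event_cov P1 A B * event_cov P2 A (~` B) -> event_cov_sign_change A B.
Proof.
move=> mA mB S1 S2; rewrite event_covCr // mulrN oppr_gt0 => /ltW cov12.
by exists P1, P2.
Qed.

End event_cov_sign_change.

Section dilation.
Context (R : realType) (T : completePseudoMetricType R).
Notation Omega := (borel_type T).
Variable Plow : set T -> R.
Hypothesis coh : coherent Plow.
Variables A B : set Omega.
Hypotheses (mA : measurable A) (mB : measurable B).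
Hypotheses (Plow_B : 0 < Plow B) (Plow_CB : 0 < Plow (~` B)).

Let mCA : measurable (~` A). Proof. exact: measurableC. Qed.
Let mCB : measurable (~` B). Proof. exact: measurableC. Qed.
Let upper_B : 0 < upper Plow B.
Proof. exact: lt_le_trans Plow_B (Plow_le_upper coh mB). Qed.
Let upper_CB : 0 < upper Plow (~` B).
Proof. exact: lt_le_trans Plow_CB (Plow_le_upper coh mCB). Qed.

Lemma dilatesD_event_cov_sign_change :
  dilates Plow (lowD Plow) (upD Plow) [set B; ~` B] A ->
  event_cov_sign_change (core Plow) A B.
Proof.
move=> [_ [_ [_ [sup_lt | inf_gt]]]].
- have [lowDB lowDCB] := sup_image2_lt sup_lt.
  have [P1 c1 cov1] := lowD_lt_event_cov_gt0 coh mA mB upper_B lowDB.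
  have [P2 c2 cov2] := lowD_lt_event_cov_gt0 coh mA mCB upper_CB lowDCB.
  apply: event_cov_sign_changeCl => //.
  exact: (event_cov_sign_change_setC mCA mB c1 c2 (mulr_gt0 cov1 cov2)).
- have [upDB upDCB] := inf_image2_gt inf_gt.
  have [P1 c1 cov1] := upD_gt_event_cov_gt0 coh mA mB upper_B upDB.
  have [P2 c2 cov2] := upD_gt_event_cov_gt0 coh mA mCB upper_CB upDCB.
  exact: (event_cov_sign_change_setC mA mB c1 c2 (mulr_gt0 cov1 cov2)).
Qed.

Lemma dilatesG_event_cov_sign_change :
  dilates Plow (lowG Plow) (upG Plow) [set B; ~` B] A ->
  event_cov_sign_change (core Plow) A B.
Proof.
move=> [_ [_ [_ [sup_lt | inf_gt]]]].
- have [lowGB lowGCB] := sup_image2_lt sup_lt.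
  have [P1 c1 cov1] := lowG_lt_event_cov_lt0 coh mA mB Plow_B lowGB.
  have [P2 c2 cov2] := lowG_lt_event_cov_lt0 coh mA mCB Plow_CB lowGCB.
  by apply: (event_cov_sign_change_setC mA mB c1 c2); rewrite nmulr_rgt0.
- have [upGB upGCB] := inf_image2_gt inf_gt.
  have [P1 c1 cov1] := upG_gt_event_cov_lt0 coh mA mB Plow_B upGB.
  have [P2 c2 cov2] := upG_gt_event_cov_lt0 coh mA mCB Plow_CB upGCB.
  apply: event_cov_sign_changeCl => //.
  by apply: (event_cov_sign_change_setC mCA mB c1 c2); rewrite nmulr_rgt0.
Qed.

End dilation.

Unset Implicit Arguments.

Theorem corollary5p7 (R : realType) (T : completePseudoMetricType R)
  (Plow : set T -> R) (A B : set (borel_type T)) :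
  polish_space T -> choquet2 Plow ->
  measurable A -> measurable B ->
  0 < Plow B -> 0 < Plow (~` B) ->
  (dilates Plow (lowD Plow) (upD Plow) [set B; ~` B] A \/
   dilates Plow (lowG Plow) (upG Plow) [set B; ~` B] A) ->
  exists2 P : probability (borel_type T) R, core Plow P &
    P (A `&` B) = (P A * P B)%E.
Proof.
move=> _ [coh _] mA mB Plow_B Plow_CB dil.
have [P1 [P2 [c1 c2 cov12]]] : event_cov_sign_change (core Plow) A B.
  case: dil; [exact: dilatesD_event_cov_sign_change |
              exact: dilatesG_event_cov_sign_change].
have [P cP covP] := mix_closed_event_cov0 (mix_closed_core (Plow:=Plow)) c1 c2 mA mB cov12.
by exists P => //; exact: event_cov_eq0.
Qed.
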